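(* Let $1\le k<n$. An $(n,n-k,n)_q$ code of size $n/k$ exists if and only if $k$ divides $n$ and $q\ge n/k$. In particular, when $k\mid n$, $q''_0(1,k,n)=n/k$.
   Context: $\mathbb{Z}_q=\{0,\dots,q-1\}$ (an alphabet); $\mathrm{wt}$ = number of nonzero coordinates; $d$ = Hamming distance; $J_q(n,w)$ = weight-$w$ words of $\mathbb{Z}_q^n$. An $(n,w,d)_q$ code of size $M$ is a subset $C\subseteq J_q(n,w)$ with $|C|=M$ and pairwise distances at least $d$. A Steiner system $S(t,k,n)$ is a pair $(N,B)$, $|N|=n$, $B$ a set of $k$-subsets (blocks) with every $t$-subset in exactly one block (an $S(1,k,n)$ exists iff $k\mid n$). For $t,k,n$ such that an $S(t,k,n)$ exists, $q''_0(t,k,n)$ is the smallest $q$ for which an $(n,n-k,n-t+1)_q$ code of size $\binom{n}{t}/\binom{k}{t}$ exists. *)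

From mathcomp Require Import all_boot.
Set Implicit Arguments. Unset Strict Implicit. Unset Printing Implicit Defensive.

Definition word (q n : nat) := {ffun 'I_n -> 'I_q}.

Definition wt (q n : nat) (x : word q n) : nat := #|[set i | val (x i) != 0%N]|.

Definition hdist (q n : nat) (x y : word q n) : nat := #|[set i | x i != y i]|.

Definition is_code (q n w d : nat) (C : {set word q n}) : Prop :=
  (forall x, x \in C -> wt x = w) /\
  (forall x y, x \in C -> y \in C -> x != y -> d <= hdist x y).

Definition code_exists (q n w d M : nat) : Prop :=
  exists C : {set word q n}, is_code w d C /\ #|C| = M.

(* q is q''_0(t,k,n): the smallest q for which an (n, n-k, n-t+1)_q code of
   size C(n,t)/C(k,t) exists. *)
Definition is_q0pp (t k n q : nat) : Prop :=
  code_exists q n (n - k) (n - t + 1) ('C(n, t) %/ 'C(k, t)) /\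
  forall q', code_exists q' n (n - k) (n - t + 1) ('C(n, t) %/ 'C(k, t)) -> q <= q'.

From mathcomp Require Import all_boot.
From mathcomp Require Import zify.
Set Implicit Arguments. Unset Strict Implicit. Unset Printing Implicit Defensive.

(* If all distances equal the length n, two codewords never agree in any
   coordinate, so reading one coordinate is injective on the code: |C| <= q,
   and |C| k = n forces k | n with |C| = n/k.  Conversely, for m = n/k <= q,
   split the coordinates into m blocks of length k and let the j-th word take
   the value (j - b) mod m on block b: it vanishes exactly on block j, and two
   different words differ in every coordinate. *)

Lemma hdist_lt_of_agree (q n : nat) (x y : word q n) (i : 'I_n) :
  x i = y i -> hdist x y < n.
Proof.
move=> xy_i; rewrite /hdist -[n in _ < n]card_ord -cardsT; apply: proper_card.
apply/properP; split; first exact: subsetT.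
by exists i; rewrite ?inE // xy_i eqxx.
Qed.

Lemma card_code_full_distance_le (q n w : nat) (C : {set word q n}) :
  0 < n -> is_code w n C -> #|C| <= q.
Proof.
move=> n_gt0 [_ dist_C]; pose i0 : 'I_n := Ordinal n_gt0.
rewrite -[q in _ <= q]card_ord; apply: (@leq_card_in _ _ (fun x : word q n => x i0)).
move=> x y xC yC xy_i0; apply/eqP; apply: contraT => x_neq_y.
by have := dist_C x y xC yC x_neq_y; rewrite leqNgt (hdist_lt_of_agree xy_i0).
Qed.

Lemma cyclic_shift_eq (m b j j' : nat) : j < m -> j' < m ->
  ((j + (m - b)) %% m == (j' + (m - b)) %% m) = (j == j').
Proof. by move=> ltjm ltj'm; rewrite eqn_modDr !modn_small. Qed.

Lemma cyclic_shift_eq0 (m b j : nat) : b < m -> j < m ->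
  ((j + (m - b)) %% m == 0) = (b == j).
Proof.
move=> ltbm ltjm; case: (leqP b j) => [lebj | ltjb].
  have -> : j + (m - b) = (j - b) + m by lia.
  by rewrite modnDr modn_small; lia.
by rewrite modn_small; lia.
Qed.

Section CyclicCode.

Variables (q m k n : nat).
Hypotheses (k_gt0 : 0 < k) (n_eq : n = m * k) (m_le_q : m <= q).

Lemma block_lt (i : 'I_n) : i %/ k < m.
Proof. by rewrite ltn_divLR // -n_eq. Qed.

Lemma card_block (j : nat) : j < m -> #|[set i : 'I_n | i %/ k == j]| = k.
Proof.
move=> ltjm.
have lt_n (t : 'I_k) : j * k + t < n.
  have : j.+1 * k <= n by rewrite n_eq leq_mul2r ltjm orbT.
  by rewrite mulSn; have := ltn_ord t; lia.
pose f (t : 'I_k) : 'I_n := Ordinal (lt_n t).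
have f_inj : injective f.
  by move=> t t' /(congr1 val) /= /eqP; rewrite eqn_add2l => /eqP /val_inj.
suff -> : [set i : 'I_n | i %/ k == j] = [set f t | t in 'I_k].
  by rewrite card_imset // card_ord.
apply/setP => i; rewrite inE; apply/eqP/imsetP => [block_i | [t _ ->]].
  have ltrk : i %% k < k by rewrite ltn_pmod.
  exists (Ordinal ltrk) => //; apply: val_inj => /=.
  by rewrite {1}(divn_eq i k) block_i.
by rewrite /= divnMDl // divn_small // addn0.
Qed.

Lemma cyclic_shift_lt (j : 'I_m) (i : nat) : (j + (m - i %/ k)) %% m < q.
Proof. by apply: leq_trans m_le_q; rewrite ltn_pmod //; have := ltn_ord j; lia. Qed.

Definition cyclic_word (j : 'I_m) : word q n :=
  [ffun i : 'I_n => Ordinal (cyclic_shift_lt j i)].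

Definition cyclic_code : {set word q n} := [set cyclic_word j | j in 'I_m].

Lemma cyclic_wordE (j : 'I_m) (i : 'I_n) :
  val (cyclic_word j i) = (j + (m - i %/ k)) %% m.
Proof. by rewrite ffunE. Qed.

Lemma cyclic_word_neq (j j' : 'I_m) (i : 'I_n) :
  j != j' -> cyclic_word j i != cyclic_word j' i.
Proof. by move=> j_neq_j'; rewrite -val_eqE /= !cyclic_wordE cyclic_shift_eq. Qed.

Lemma cyclic_word_inj : 0 < n -> injective cyclic_word.
Proof.
move=> n_gt0 j j' eq_jj'; apply/eqP; apply: contraT => j_neq_j'.
by have := cyclic_word_neq (Ordinal n_gt0) j_neq_j'; rewrite eq_jj' eqxx.
Qed.

Lemma hdist_cyclic_word (j j' : 'I_m) :
  j != j' -> hdist (cyclic_word j) (cyclic_word j') = n.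
Proof.
move=> j_neq_j'; rewrite /hdist -[RHS]card_ord.
by apply: eq_card => i; rewrite !inE cyclic_word_neq.
Qed.

Lemma wt_cyclic_word (j : 'I_m) : wt (cyclic_word j) = n - k.
Proof.
have card_compl : #|~: [set i : 'I_n | i %/ k == j]| = n - k.
  have := cardsC [set i : 'I_n | i %/ k == j].
  by rewrite card_block // card_ord => /(canRL (addKn k)).
rewrite /wt -card_compl; apply: eq_card => i.
by rewrite !inE cyclic_wordE cyclic_shift_eq0 ?block_lt.
Qed.

Lemma cyclic_code_is_code : is_code (n - k) n cyclic_code.
Proof.
split=> [_ /imsetP [j _ ->] | _ _ /imsetP [j _ ->] /imsetP [j' _ ->] neq_w].
  exact: wt_cyclic_word.
by rewrite hdist_cyclic_word //; apply: contraNneq neq_w => ->.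
Qed.

Lemma card_cyclic_code : 0 < n -> #|cyclic_code| = m.
Proof. by move=> n_gt0; rewrite card_imset ?card_ord //; apply: cyclic_word_inj. Qed.

End CyclicCode.

Lemma code_of_size_quotient_iff (q n k : nat) : 0 < k -> 0 < n ->
  (exists C : {set word q n}, is_code (n - k) n C /\ #|C| * k = n)
  <-> (k %| n /\ n %/ k <= q).
Proof.
move=> k_gt0 n_gt0; split.
  case=> C [codeC sizeC]; rewrite -sizeC dvdn_mull // mulnK //.
  by split=> //; apply: card_code_full_distance_le codeC.
case=> dvd_kn m_le_q; have n_eq : n = n %/ k * k by rewrite divnK.
exists (cyclic_code k_gt0 n_eq m_le_q); split; first exact: cyclic_code_is_code.
by rewrite card_cyclic_code.
Qed.

Theorem mainTheorem15 (n k : nat) (hk1 : 1 <= k) (hkn : k < n) :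
  (forall q : nat,
     (exists C : {set word q n}, is_code (n - k) n C /\ #|C| * k = n)
     <-> (k %| n /\ n %/ k <= q))
  /\ (k %| n -> is_q0pp 1 k n (n %/ k)).
Proof.
have n_gt0 : 0 < n by lia.
have size_iff q := code_of_size_quotient_iff q hk1 n_gt0.
split=> // dvd_kn.
have code_exists_iff q : code_exists q n (n - k) n (n %/ k) <-> n %/ k <= q.
  split=> [[C [codeC sizeC]] | le_q].
    by have [|//] := proj1 (size_iff q); exists C; rewrite sizeC divnK.
  have [C [codeC sizeC]] := proj2 (size_iff q) (conj dvd_kn le_q).
  by exists C; rewrite -[in _ %/ k]sizeC mulnK.
rewrite /is_q0pp !bin1 subnK //; split=> [|q' /code_exists_iff //].
exact/code_exists_iff.
Qed.
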